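(* Let $(A,\cdot_A,a_A)$ be a left-symmetric algebroid and $H\in\Gamma(\mathrm{Sym}^2(A))$ nondegenerate, i.e. $H^\sharp:A^*\to A$ is an isomorphism. Let $H^{-1}\in\Gamma(\mathrm{Sym}^2(A^* ))$ be the symmetric form corresponding to $(H^\sharp)^{-1}$, i.e. $H^{-1}(x,y)=\langle (H^\sharp)^{-1}x,y\rangle$, regarded as an element of $C^2(A)=\Gamma(A^*\otimes A^* )$. Then $\llbracket H,H\rrbracket=0$ if and only if $\delta(H^{-1})=0$.
   Context: A left-symmetric algebroid is a vector bundle $A\to M$ with an $\mathbb R$-bilinear multiplication $\cdot_A$ on $\Gamma(A)$ with $x\cdot_A(y\cdot_Az)-(x\cdot_Ay)\cdot_Az$ symmetric in $x,y$, and an anchor $a_A:A\to TM$ with $x\cdot_A(fy)=f(x\cdot_Ay)+a_A(x)(f)y$, $(fx)\cdot_Ay=f(x\cdot_Ay)$; $[x,y]_A=x\cdot_Ay-y\cdot_Ax$. For $\varphi\in C^2(A)=\Gamma(A^*\otimes A^* )$, $\delta\varphi(x_1,x_2,x_3)=a_A(x_1)\varphi(x_2,x_3)-a_A(x_2)\varphi(x_1,x_3)-\varphi(x_2,x_1\cdot_Ax_3)+\varphi(x_1,x_2\cdot_Ax_3)-\varphi([x_1,x_2]_A,x_3)$. $\mathrm{Sym}^2(A)$ is the bundle of symmetric elements of $A\otimes A$; for $H\in\Gamma(\mathrm{Sym}^2(A))$, $H^\sharp:A^*\to A$ is $\langle H^\sharp(\xi),\eta\rangle=H(\xi,\eta)$,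 and $\llbracket H,H\rrbracket\in\Gamma(\wedge^2A\otimes A)$ is $\llbracket H,H\rrbracket(\xi_1,\xi_2,\xi_3)=a_A(H^\sharp\xi_1)\langle H^\sharp\xi_2,\xi_3\rangle-a_A(H^\sharp\xi_2)\langle H^\sharp\xi_1,\xi_3\rangle+\langle\xi_1,H^\sharp\xi_2\cdot_AH^\sharp\xi_3\rangle-\langle\xi_2,H^\sharp\xi_1\cdot_AH^\sharp\xi_3\rangle-\langle\xi_3,[H^\sharp\xi_1,H^\sharp\xi_2]_A\rangle$. *)

(* Algebraic (sections-level) model of a left-symmetric
   algebroid: R plays the role of C^oo(M), V of Gamma(A) (an R-module),
   Gamma(A^* ) is the R-dual {linear V -> R^o}, vector fields are
   derivations of R. *)
From HB Require Import structures.
From mathcomp Require Import all_boot all_order all_algebra.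
Set Implicit Arguments. Unset Strict Implicit. Unset Printing Implicit Defensive.
Import Order.TTheory GRing.Theory Num.Theory.
Local Open Scope ring_scope.

Definition dual (R : comNzRingType) (V : lmodType R) := {linear V -> R^o}.

Record lsalgebroid (R : comNzRingType) (V : lmodType R) := LSAlgebroid {
  lsmul : V -> V -> V;
  anchor : V -> R -> R;
  lsmulDl : forall x y z, lsmul (x + y) z = lsmul x z + lsmul y z;
  lsmulDr : forall x y z, lsmul x (y + z) = lsmul x y + lsmul x z;
  lsmul_leftsym : forall x y z,
    lsmul x (lsmul y z) - lsmul (lsmul x y) z
    = lsmul y (lsmul x z) - lsmul (lsmul y x) z;
  lsmul_scaler : forall x (f : R) y,
    lsmul x (f *: y) = f *: lsmul x y + anchor x f *: y;
  lsmul_scalel : forall (f : R) x y, lsmul (f *: x) y = f *: lsmul x y;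
  (* the anchor is a bundle map A -> TM: R-linear in x, with values vector
     fields, i.e. derivations of R *)
  anchorD : forall x y f, anchor (x + y) f = anchor x f + anchor y f;
  anchorZ : forall (g : R) x f, anchor (g *: x) f = g * anchor x f;
  anchor_add : forall x f g, anchor x (f + g) = anchor x f + anchor x g;
  anchor_mul : forall x f g, anchor x (f * g) = f * anchor x g + g * anchor x f
}.
Arguments lsalgebroid : clear implicits.

Definition lsbracket (R : comNzRingType) (V : lmodType R) (A : lsalgebroid R V) (x y : V) : V :=
  lsmul A x y - lsmul A y x.

Definition lsdelta (R : comNzRingType) (V : lmodType R) (A : lsalgebroid R V) (phi : V -> V -> R)
    (x1 x2 x3 : V) : R :=
  anchor A x1 (phi x2 x3) - anchor A x2 (phi x1 x3)
  - phi x2 (lsmul A x1 x3) + phi x1 (lsmul A x2 x3)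
  - phi (lsbracket A x1 x2) x3.

(* [[H,H]] expressed through H^sharp = Hs; pairing <xi, x> = xi x *)
Definition HH (R : comNzRingType) (V : lmodType R) (A : lsalgebroid R V) (Hs : dual V -> V)
    (xi1 xi2 xi3 : dual V) : R :=
  anchor A (Hs xi1) (xi3 (Hs xi2)) - anchor A (Hs xi2) (xi3 (Hs xi1))
  + xi1 (lsmul A (Hs xi2) (Hs xi3)) - xi2 (lsmul A (Hs xi1) (Hs xi3))
  - xi3 (lsbracket A (Hs xi1) (Hs xi2)).

Definition Hinvform (R : comNzRingType) (V : lmodType R) (Hinv : V -> dual V) (x y : V) : R := Hinv x y.

(* Substituting [xi_i = (H^sharp)^{-1} x_i] into [[H,H]] turns each term into the
   corresponding term of [delta(H^{-1})], once the symmetry of [H^{-1}] is used to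
   swap arguments; since [H^sharp] is bijective, one form vanishes iff the other does. *)
From HB Require Import structures.
From mathcomp Require Import all_boot all_order all_algebra.
From mathcomp Require Import ring.
Set Implicit Arguments. Unset Strict Implicit.
Local Open Scope ring_scope.

Section NondegenerateSymmetric.

Variables (R : comNzRingType) (V : lmodType R).
Variables (H : dual V -> dual V -> R) (Hs : dual V -> V) (Hinv : V -> dual V).
Hypothesis H_sym : forall xi eta, H xi eta = H eta xi.
Hypothesis Hs_def : forall xi eta : dual V, eta (Hs xi) = H xi eta.
Hypothesis Hinv_r : cancel Hinv Hs.

Lemma Hinvform_sym (x y : V) : Hinvform Hinv x y = Hinvform Hinv y x.
Proof. by rewrite /Hinvform -{1}(Hinv_r y) Hs_def H_sym -Hs_def Hinv_r. Qed.

Lemma HH_Hinv (A : lsalgebroid R V) (x1 x2 x3 : V) :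
  HH A Hs (Hinv x1) (Hinv x2) (Hinv x3) = lsdelta A (Hinvform Hinv) x1 x2 x3.
Proof.
rewrite /HH /lsdelta !Hinv_r.
have swap x y : Hinv x y = Hinv y x by exact: Hinvform_sym.
rewrite (swap x3 x2) (swap x3 x1) (swap x3 (lsbracket _ _ _)) /Hinvform.
ring.
Qed.

End NondegenerateSymmetric.

Theorem mainTheorem5 (R : comNzRingType) (V : lmodType R)
  (A : lsalgebroid R V)
  (H : dual V -> dual V -> R) (Hs : dual V -> V) (Hinv : V -> dual V)
  (H_sym : forall xi eta, H xi eta = H eta xi)
  (Hs_def : forall xi eta : dual V, eta (Hs xi) = H xi eta)
  (Hinv_l : cancel Hs Hinv) (Hinv_r : cancel Hinv Hs) :
  (forall xi1 xi2 xi3, HH A Hs xi1 xi2 xi3 = 0) <->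
  (forall x1 x2 x3, lsdelta A (Hinvform Hinv) x1 x2 x3 = 0).
Proof.
have key := HH_Hinv H_sym Hs_def Hinv_r A.
split=> vanish a b c.
- by rewrite -key.
- by rewrite -(Hinv_l a) -(Hinv_l b) -(Hinv_l c) key.
Qed.
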